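(* Let $\mathbf{C}$ be a category of $\mathbf{FI}$ type and $c_1,c_2$ objects. There is a natural isomorphism of functors $\mathbf{C}\to\mathbf{Set}$ $$\mathrm{Hom}(c_1,\bullet)\times\mathrm{Hom}(c_2,\bullet)\;\cong\;\coprod_{[d]}\mathrm{Hom}(d,\bullet)\times_{G_d}\mathrm{PO}_d(c_1,c_2),$$ where $[d]$ ranges over isomorphism classes of objects and $d$ is a chosen representative of $[d]$, and this isomorphism respects the right actions of $G_{c_1}\times G_{c_2}$ by precomposition on both sides.
   Context: A category $\mathbf{C}$ is of $\mathbf{FI}$ type if: (1) all Hom-sets are finite; (2) every morphism is a monomorphism and every endomorphism is an isomorphism; (3) for all objects $c,d$ the group $G_d=\mathrm{Aut}_{\mathbf{C}}(d)$ acts transitively on $\mathrm{Hom}_{\mathbf{C}}(c,d)$; (4) for every $d$ only finitely many isomorphism classes of $c$ have $\mathrm{Hom}(c,d)\neq\emptyset$; (5) every pair $c_1\to d\leftarrow c_2$ has a pullback, and every pair $f_i:p\to c_i$ has a weak push-out, i.e. a commutative square $g_i:c_i\to d$ ($g_1f_1=g_2f_2$) which is a pullback square and such that for every other pullback square $h_i:c_i\to z$ with $h_1f_1=h_2f_2$ there is a unique $h:d\to z$ with $hg_i=h_i$. The push-out set $\mathrm{PO}_d(c_1,c_2)$ is the set of pairs of morphisms $(g_1:c_1\to d,\ g_2:c_2\to d)$ such that the pullback square of $g_1,g_2$ (with corner $c_1\times_d c_2$) is a weak push-out square. $G_d$ acts on it on the left by postcomposition, and $G_{c_1}\times G_{c_2}$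 on the right by precomposition. $\mathrm{Hom}(d,x)\times_{G_d}\mathrm{PO}_d(c_1,c_2)$ is the quotient of the product by $(f\circ g,(r_1,r_2))\sim(f,(g\circ r_1,g\circ r_2))$ for $g\in G_d$. *)

From Stdlib Require Import List.
Set Implicit Arguments.

Record Category := {
  Obj :> Type;
  Hom : Obj -> Obj -> Type;
  comp : forall a b c : Obj, Hom b c -> Hom a b -> Hom a c;
  idm : forall a : Obj, Hom a a;
  comp_assoc : forall a b c d (h : Hom c d) (g : Hom b c) (f : Hom a b),
      comp h (comp g f) = comp (comp h g) f;
  comp_id_l : forall a b (f : Hom a b), comp (idm b) f = f;
  comp_id_r : forall a b (f : Hom a b), comp f (idm a) = f
}.

Arguments Hom {_} _ _.
Arguments comp {_ _ _ _} _ _.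
Arguments idm {_} _.

Section CatDefs.
Variable C : Category.

Definition is_iso {a b : C} (f : Hom a b) : Prop :=
  exists g : Hom b a, comp g f = idm a /\ comp f g = idm b.

Definition isomorphic (a b : C) : Prop := exists f : Hom a b, is_iso f.

Definition is_pullback {p c1 c2 d : C}
  (f1 : Hom p c1) (f2 : Hom p c2) (g1 : Hom c1 d) (g2 : Hom c2 d) : Prop :=
  comp g1 f1 = comp g2 f2 /\
  forall (q : C) (u1 : Hom q c1) (u2 : Hom q c2), comp g1 u1 = comp g2 u2 ->
    exists! u : Hom q p, comp f1 u = u1 /\ comp f2 u = u2.

Definition is_weak_pushout {p c1 c2 d : C}
  (f1 : Hom p c1) (f2 : Hom p c2) (g1 : Hom c1 d) (g2 : Hom c2 d) : Prop :=
  is_pullback f1 f2 g1 g2 /\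
  forall (z : C) (h1 : Hom c1 z) (h2 : Hom c2 z), is_pullback f1 f2 h1 h2 ->
    exists! h : Hom d z, comp h g1 = h1 /\ comp h g2 = h2.

Definition in_PO {c1 c2 d : C} (g1 : Hom c1 d) (g2 : Hom c2 d) : Prop :=
  exists (p : C) (f1 : Hom p c1) (f2 : Hom p c2), is_weak_pushout f1 f2 g1 g2.

Definition FI_type : Prop :=
  (forall c d : C, exists l : list (Hom c d), forall f, In f l) /\
  (forall (a b c : C) (f : Hom b c) (g h : Hom a b), comp f g = comp f h -> g = h) /\
  (forall (d : C) (f : Hom d d), is_iso f) /\
  (forall (c d : C) (f g : Hom c d), exists a : Hom d d, is_iso a /\ comp a f = g) /\
  (forall d : C, exists l : list C, forall c : C, inhabited (Hom c d) ->
       exists c', In c' l /\ isomorphic c c') /\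
  (forall (c1 c2 d : C) (g1 : Hom c1 d) (g2 : Hom c2 d),
       exists (p : C) (f1 : Hom p c1) (f2 : Hom p c2), is_pullback f1 f2 g1 g2) /\
  (forall (p c1 c2 : C) (f1 : Hom p c1) (f2 : Hom p c2),
       exists (d : C) (g1 : Hom c1 d) (g2 : Hom c2 d), is_weak_pushout f1 f2 g1 g2).

Definition iso_class_reps (Rep : C -> Prop) : Prop :=
  (forall c : C, exists d, Rep d /\ isomorphic c d) /\
  (forall d d' : C, Rep d -> Rep d' -> isomorphic d d' -> d = d').

End CatDefs.

Arguments is_iso {C a b} f.
Arguments isomorphic {C} a b.
Arguments is_pullback {C p c1 c2 d} f1 f2 g1 g2.
Arguments is_weak_pushout {C p c1 c2 d} f1 f2 g1 g2.
Arguments in_PO {C c1 c2 d} g1 g2.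
Arguments iso_class_reps {C} Rep.


(* Every pair (u1, u2) out of c1, c2 factors through a weak push-out of its
   own pullback, and by the universal property of that weak push-out any two
   factorisations h o (r1, r2) = h' o (r1', r2') with (r1, r2) in PO are
   related by a morphism k with h = h' o k.  If both pairs lie in PO there are
   morphisms d -> d' and d' -> d, so d and d' are isomorphic (endomorphisms
   are automorphisms), and within a single d the morphism k is an
   automorphism: the fibres of (h, r1, r2) |-> (h r1, h r2) are exactly the
   G_d-orbits. *)

Arguments comp_assoc {c0 a b c d} h g f.
Arguments comp_id_l {c0 a b} f.
Arguments comp_id_r {c0 a b} f.

Section IsoInvariance.
Context {C : Category}.

Lemma is_pullback_precomp_iso {p c1 c2 c1' c2' d : C}
  {f1 : Hom p c1} {f2 : Hom p c2} {g1 : Hom c1 d} {g2 : Hom c2 d}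
  (a1 : Hom c1' c1) (b1 : Hom c1 c1') (a2 : Hom c2' c2) (b2 : Hom c2 c2') :
  comp a1 b1 = idm c1 -> comp a2 b2 = idm c2 ->
  comp b1 a1 = idm c1' -> comp b2 a2 = idm c2' ->
  is_pullback f1 f2 g1 g2 ->
  is_pullback (comp b1 f1) (comp b2 f2) (comp g1 a1) (comp g2 a2).
Proof.
  intros Hab1 Hab2 Hba1 Hba2 [Hsq Huniv]. split.
  - rewrite <- !comp_assoc, (comp_assoc a1 b1), (comp_assoc a2 b2), Hab1, Hab2,
      !comp_id_l. exact Hsq.
  - intros q u1 u2 Hu. rewrite <- !comp_assoc in Hu.
    destruct (Huniv q _ _ Hu) as [u [[Hu1 Hu2] Huniq]]. exists u. split.
    + split; rewrite <- comp_assoc;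
        [rewrite Hu1, comp_assoc, Hba1 | rewrite Hu2, comp_assoc, Hba2];
        apply comp_id_l.
    + intros u' [Hu1' Hu2']. apply Huniq. split.
      * rewrite <- Hu1', <- comp_assoc, (comp_assoc a1 b1), Hab1, comp_id_l.
        reflexivity.
      * rewrite <- Hu2', <- comp_assoc, (comp_assoc a2 b2), Hab2, comp_id_l.
        reflexivity.
Qed.

Lemma is_weak_pushout_precomp_iso {p c1 c2 c1' c2' d : C}
  {f1 : Hom p c1} {f2 : Hom p c2} {g1 : Hom c1 d} {g2 : Hom c2 d}
  (a1 : Hom c1' c1) (b1 : Hom c1 c1') (a2 : Hom c2' c2) (b2 : Hom c2 c2') :
  comp a1 b1 = idm c1 -> comp a2 b2 = idm c2 ->
  comp b1 a1 = idm c1' -> comp b2 a2 = idm c2' ->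
  is_weak_pushout f1 f2 g1 g2 ->
  is_weak_pushout (comp b1 f1) (comp b2 f2) (comp g1 a1) (comp g2 a2).
Proof.
  intros Hab1 Hab2 Hba1 Hba2 [Hpb Hwpo].
  split; [apply is_pullback_precomp_iso; assumption |].
  intros z h1 h2 Hz.
  assert (Hz' : is_pullback f1 f2 (comp h1 b1) (comp h2 b2)).
  { pose proof (is_pullback_precomp_iso b1 a1 b2 a2 Hba1 Hba2 Hab1 Hab2 Hz) as H.
    rewrite (comp_assoc a1 b1), (comp_assoc a2 b2), Hab1, Hab2, !comp_id_l in H.
    exact H. }
  destruct (Hwpo z _ _ Hz') as [k [[Hk1 Hk2] Huniq]]. exists k. split.
  - split; rewrite comp_assoc; [rewrite Hk1 | rewrite Hk2]; rewrite <- comp_assoc;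
      [rewrite Hba1 | rewrite Hba2]; apply comp_id_r.
  - intros k' [Hk1' Hk2']. apply Huniq. split.
    + rewrite <- Hk1', <- !comp_assoc, Hab1, comp_id_r. reflexivity.
    + rewrite <- Hk2', <- !comp_assoc, Hab2, comp_id_r. reflexivity.
Qed.

Lemma in_PO_precomp_iso {c1 c2 d : C} {r1 : Hom c1 d} {r2 : Hom c2 d}
  {a1 : Hom c1 c1} {a2 : Hom c2 c2} :
  in_PO r1 r2 -> is_iso a1 -> is_iso a2 -> in_PO (comp r1 a1) (comp r2 a2).
Proof.
  intros [p [f1 [f2 Hw]]] [b1 [Hba1 Hab1]] [b2 [Hba2 Hab2]].
  exists p, (comp b1 f1), (comp b2 f2).
  apply is_weak_pushout_precomp_iso; assumption.
Qed.

Lemma isomorphic_of_hom_both_ways {a b : C} (k : Hom a b) (k' : Hom b a) :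
  (forall (e : C) (f : Hom e e), is_iso f) -> isomorphic a b.
Proof.
  intros Hendo.
  destruct (Hendo a (comp k' k)) as [m [Hm _]].
  destruct (Hendo b (comp k k')) as [n [_ Hn]].
  assert (Hleft : comp m k' = comp k' n).
  { rewrite <- (comp_id_r (comp m k')), <- Hn, !comp_assoc, <- (comp_assoc m k' k),
      Hm, comp_id_l. reflexivity. }
  exists k, (comp k' n). split.
  - rewrite <- Hleft, <- comp_assoc. exact Hm.
  - rewrite comp_assoc. exact Hn.
Qed.

End IsoInvariance.

Section MonoSquares.
Context {C : Category}.
Hypothesis comp_mono : forall {a b c : C} (f : Hom b c) (g h : Hom a b),
  comp f g = comp f h -> g = h.

Lemma is_pullback_postcomp {p c1 c2 d e : C} {f1 : Hom p c1} {f2 : Hom p c2}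
  {g1 : Hom c1 d} {g2 : Hom c2 d} (m : Hom d e) :
  is_pullback f1 f2 g1 g2 -> is_pullback f1 f2 (comp m g1) (comp m g2).
Proof.
  intros [Hsq Huniv]. split.
  - rewrite <- !comp_assoc, Hsq. reflexivity.
  - intros q u1 u2 Hu. apply Huniv, (comp_mono m). rewrite !comp_assoc. exact Hu.
Qed.

Lemma is_weak_pushout_postcomp_iso {p c1 c2 d e : C} {f1 : Hom p c1}
  {f2 : Hom p c2} {g1 : Hom c1 d} {g2 : Hom c2 d} (phi : Hom d e) (psi : Hom e d) :
  comp psi phi = idm d -> comp phi psi = idm e ->
  is_weak_pushout f1 f2 g1 g2 -> is_weak_pushout f1 f2 (comp phi g1) (comp phi g2).
Proof.
  intros Hpsiphi Hphipsi [Hpb Hwpo].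
  split; [apply is_pullback_postcomp; exact Hpb |].
  intros z h1 h2 Hz. destruct (Hwpo z h1 h2 Hz) as [k [[Hk1 Hk2] Huniq]].
  exists (comp k psi). split.
  - split; rewrite <- comp_assoc, (comp_assoc psi phi), Hpsiphi, comp_id_l;
      assumption.
  - intros k' [Hk1' Hk2'].
    assert (Hk : k = comp k' phi) by (apply Huniq; split; rewrite <- comp_assoc;
      assumption).
    rewrite Hk, <- comp_assoc, Hphipsi, comp_id_r. reflexivity.
Qed.

Lemma in_PO_postcomp_iso {c1 c2 d e : C} (r1 : Hom c1 d) (r2 : Hom c2 d)
  (phi : Hom d e) :
  is_iso phi -> in_PO r1 r2 -> in_PO (comp phi r1) (comp phi r2).
Proof.
  intros [psi [Hpsiphi Hphipsi]] [p [f1 [f2 Hw]]].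
  exists p, f1, f2. exact (is_weak_pushout_postcomp_iso phi psi Hpsiphi Hphipsi Hw).
Qed.

(* A factorisation through a PO pair is initial among all factorisations: the
   pullback of (r1, r2) is also the pullback of (r1', r2') since h and h' are
   mono, and the weak push-out property then produces k. *)
Lemma in_PO_factor {c1 c2 d d' x : C} {r1 : Hom c1 d} {r2 : Hom c2 d}
  {r1' : Hom c1 d'} {r2' : Hom c2 d'} (h : Hom d x) (h' : Hom d' x) :
  in_PO r1 r2 -> comp h r1 = comp h' r1' -> comp h r2 = comp h' r2' ->
  exists k : Hom d d', comp k r1 = r1' /\ comp k r2 = r2' /\ h = comp h' k.
Proof.
  intros [p [f1 [f2 [[Hsq Huniv] Hwpo]]]] Hx1 Hx2.
  assert (Hpb' : is_pullback f1 f2 r1' r2').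
  { split.
    - apply (comp_mono h'). rewrite !comp_assoc, <- Hx1, <- Hx2, <- !comp_assoc, Hsq.
      reflexivity.
    - intros q v1 v2 Hv. apply Huniv, (comp_mono h).
      rewrite !comp_assoc, Hx1, Hx2, <- !comp_assoc, Hv. reflexivity. }
  destruct (Hwpo _ _ _ Hpb') as [k [[Hk1 Hk2] _]].
  exists k. split; [exact Hk1 | split; [exact Hk2 |]].
  destruct (Hwpo _ (comp h r1) (comp h r2)
              (is_pullback_postcomp h (conj Hsq Huniv))) as [m [_ Huniq]].
  transitivity m.
  - symmetry. apply Huniq. split; reflexivity.
  - apply Huniq. rewrite <- !comp_assoc, Hk1, Hk2. split; symmetry; assumption.
Qed.

End MonoSquares.

Section FIType.
Context {C : Category}.
Hypothesis HC : FI_type C.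
Context {Rep : C -> Prop} (HRep : iso_class_reps Rep).

Lemma FI_comp_mono (a b c : C) (f : Hom b c) (g h : Hom a b) :
  comp f g = comp f h -> g = h.
Proof. apply HC. Qed.

Lemma FI_endo_is_iso (d : C) (f : Hom d d) : is_iso f.
Proof. apply HC. Qed.

Lemma FI_factor_through_PO {c1 c2 x : C} (u1 : Hom c1 x) (u2 : Hom c2 x) :
  exists (d : C) (h : Hom d x) (r1 : Hom c1 d) (r2 : Hom c2 d),
    in_PO r1 r2 /\ comp h r1 = u1 /\ comp h r2 = u2.
Proof.
  destruct HC as (_ & _ & _ & _ & _ & Hpb & Hwpo).
  destruct (Hpb _ _ _ u1 u2) as [p [f1 [f2 Hp]]].
  destruct (Hwpo _ _ _ f1 f2) as [d [g1 [g2 [Hpb0 Hwpo0]]]].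
  destruct (Hwpo0 _ _ _ Hp) as [h [[Hh1 Hh2] _]].
  exists d, h, g1, g2. split; [exists p, f1, f2; split; assumption | split; assumption].
Qed.

Lemma FI_factor_through_rep_PO {c1 c2 x : C} (u1 : Hom c1 x) (u2 : Hom c2 x) :
  exists (d : C) (h : Hom d x) (r1 : Hom c1 d) (r2 : Hom c2 d),
    Rep d /\ in_PO r1 r2 /\ comp h r1 = u1 /\ comp h r2 = u2.
Proof.
  destruct HRep as [Hrep _].
  destruct (FI_factor_through_PO u1 u2) as [d0 [h [g1 [g2 [Hg [Hh1 Hh2]]]]]].
  destruct (Hrep d0) as [d [Hd [phi [psi [Hpsiphi Hphipsi]]]]].
  exists d, (comp h psi), (comp phi g1), (comp phi g2).
  split; [exact Hd | split].
  - apply in_PO_postcomp_iso; [exact FI_comp_mono | exists psi; split |]; assumption.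
  - rewrite <- !comp_assoc, (comp_assoc psi phi g1), (comp_assoc psi phi g2),
      Hpsiphi, !comp_id_l. split; assumption.
Qed.

Lemma FI_PO_reps_eq {c1 c2 d d' x : C}
  {r1 : Hom c1 d} {r2 : Hom c2 d} {r1' : Hom c1 d'} {r2' : Hom c2 d'}
  {h : Hom d x} {h' : Hom d' x} :
  Rep d -> Rep d' -> in_PO r1 r2 -> in_PO r1' r2' ->
  comp h r1 = comp h' r1' -> comp h r2 = comp h' r2' -> d = d'.
Proof.
  intros Hd Hd' Hr Hr' Hx1 Hx2.
  destruct (in_PO_factor FI_comp_mono h h' Hr Hx1 Hx2) as [k _].
  destruct (in_PO_factor FI_comp_mono h' h Hr' (eq_sym Hx1) (eq_sym Hx2)) as [k' _].
  apply (proj2 HRep); [assumption | assumption |].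
  exact (isomorphic_of_hom_both_ways k k' FI_endo_is_iso).
Qed.

Lemma FI_PO_fibre {c1 c2 d x : C} (r1 r1' : Hom c1 d) (r2 r2' : Hom c2 d)
  (h h' : Hom d x) :
  in_PO r1 r2 ->
  ((comp h r1, comp h r2) = (comp h' r1', comp h' r2') <->
   exists g : Hom d d, is_iso g /\ h = comp h' g /\ r1' = comp g r1 /\ r2' = comp g r2).
Proof.
  intros Hr. split.
  - intros Hx. injection Hx as Hx1 Hx2.
    destruct (in_PO_factor FI_comp_mono h h' Hr Hx1 Hx2) as [g [Hg1 [Hg2 Hg]]].
    exists g. split; [apply FI_endo_is_iso |].
    split; [exact Hg | split; symmetry; assumption].
  - intros [g [_ [-> [-> ->]]]]. rewrite !comp_assoc. reflexivity.
Qed.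

End FIType.

Theorem mainTheorem9 (C : Category) (HC : FI_type C) (c1 c2 : C)
  (Rep : C -> Prop) (HRep : iso_class_reps Rep) :
  exists Phi : forall (x d : C), Hom d x -> Hom c1 d -> Hom c2 d ->
                 (Hom c1 x * Hom c2 x)%type,
    (* naturality in x *)
    (forall (x y : C) (f : Hom x y) (d : C) (h : Hom d x)
            (r1 : Hom c1 d) (r2 : Hom c2 d),
        Rep d -> in_PO r1 r2 ->
        Phi y d (comp f h) r1 r2
        = (comp f (fst (Phi x d h r1 r2)), comp f (snd (Phi x d h r1 r2)))) /\
    (* surjectivity *)
    (forall (x : C) (u1 : Hom c1 x) (u2 : Hom c2 x),
        exists (d : C) (h : Hom d x) (r1 : Hom c1 d) (r2 : Hom c2 d),
          Rep d /\ in_PO r1 r2 /\ Phi x d h r1 r2 = (u1, u2)) /\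
    (* distinct summands have disjoint images *)
    (forall (x d d' : C) (h : Hom d x) (r1 : Hom c1 d) (r2 : Hom c2 d)
            (h' : Hom d' x) (r1' : Hom c1 d') (r2' : Hom c2 d'),
        Rep d -> Rep d' -> in_PO r1 r2 -> in_PO r1' r2' ->
        Phi x d h r1 r2 = Phi x d' h' r1' r2' -> d = d') /\
    (* within a summand, fibres are exactly the G_d-orbits:
       (f o g, r) ~ (f, g o r) *)
    (forall (x d : C) (h h' : Hom d x) (r1 r1' : Hom c1 d) (r2 r2' : Hom c2 d),
        Rep d -> in_PO r1 r2 -> in_PO r1' r2' ->
        (Phi x d h r1 r2 = Phi x d h' r1' r2' <->
         exists g : Hom d d, is_iso g /\ h = comp h' g /\
                             r1' = comp g r1 /\ r2' = comp g r2)) /\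
    (* compatibility with the right G_{c1} x G_{c2} actions *)
    (forall (x d : C) (h : Hom d x) (r1 : Hom c1 d) (r2 : Hom c2 d)
            (a1 : Hom c1 c1) (a2 : Hom c2 c2),
        Rep d -> in_PO r1 r2 -> is_iso a1 -> is_iso a2 ->
        in_PO (comp r1 a1) (comp r2 a2) /\
        Phi x d h (comp r1 a1) (comp r2 a2)
        = (comp (fst (Phi x d h r1 r2)) a1, comp (snd (Phi x d h r1 r2)) a2)).
Proof.
  exists (fun x d h r1 r2 => (comp h r1, comp h r2)).
  split; [| split; [| split; [| split]]].
  - intros. simpl. rewrite !comp_assoc. reflexivity.
  - intros x u1 u2.
    destruct (FI_factor_through_rep_PO HC HRep u1 u2)
      as [d [h [r1 [r2 [Hd [Hr [Hh1 Hh2]]]]]]].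
    exists d, h, r1, r2. rewrite Hh1, Hh2. auto.
  - intros x d d' h r1 r2 h' r1' r2' Hd Hd' Hr Hr' Hx. injection Hx as Hx1 Hx2.
    exact (FI_PO_reps_eq HC HRep Hd Hd' Hr Hr' Hx1 Hx2).
  - intros x d h h' r1 r1' r2 r2' _ Hr _. exact (FI_PO_fibre HC r1 r1' r2 r2' h h' Hr).
  - intros x d h r1 r2 a1 a2 _ Hr Ha1 Ha2. split.
    + exact (in_PO_precomp_iso Hr Ha1 Ha2).
    + simpl. rewrite !comp_assoc. reflexivity.
Qed.
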